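(* Let $S$ be a state of a $d$-dimensional Hegselmann–Krause system with social network $G=(V,E)$ and confidence bound $\varepsilon>0$, with influence network $(V,E_I)$, and let $e=\{u,w\}\in E_I$ with $x_u\ne x_w$. Let $\bar S_e$ be the projected state along $e$. Then: (1) $\|x_u-x_w\|_2=|\bar x_u-\bar x_w|$; (2) $N_v=\bar N_v$ for every $v\in V$; (3) $\sum_{v\in V}|N_v|\,\|m_v\|_2\ \ge\ \sum_{v\in V}|\bar N_v|\,|\bar m_v|$.
   Context: A $d$-dimensional Hegselmann–Krause system has a finite undirected graph $G=(V,E)$ (social network), a confidence bound $\varepsilon>0$, and a state given by positions $x_v\in\mathbb{R}^d$, $v\in V$. In a state, the influencing neighborhood of $v$ is $N_v=\{u:\{u,v\}\in E,\ \|x_u-x_v\|_2\le\varepsilon\}\cup\{v\}$, the movement of $v$ is $m_v=\frac{1}{|N_v|}\sum_{u\in N_v}(x_u-x_v)$, and the influence network is $(V,E_I)$ with $E_I=\{\{u,v\}\in E:\|x_u-x_v\|_2\le\varepsilon\}$. For an edge $e=\{u,w\}\in E_I$, let $p=(x_u-x_w)/\|x_u-x_w\|_2$ (the order of $u,w$ chosen arbitrarily). The projected state $\bar S_e$ is the state of the $1$-dimensional HKS with social network $(V,E_I)$, the same confidence bound $\varepsilon$, and positions $\bar x_v=x_v^\top p\in\mathbb{R}$. In $\bar S_e$, $\bar N_v=\{u:\{u,v\}\in E_I,\ |\bar x_u-\bar x_v|\le\varepsilon\}\cup\{v\}$ and $\bar m_v=\frac{1}{|\bar N_v|}\sum_{u\in\bar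 N_v}(\bar x_u-\bar x_v)$. *)

From HB Require Import structures.
From mathcomp Require Import all_boot all_order all_algebra.
From mathcomp Require Import reals.
Set Implicit Arguments. Unset Strict Implicit. Unset Printing Implicit Defensive.
Import Order.TTheory GRing.Theory Num.Theory.
Local Open Scope ring_scope.

Section HKS.
Variables (R : realType) (d : nat) (V : finType).

Definition dotv (a b : 'rV[R]_d) : R := \sum_(i < d) a 0 i * b 0 i.
Definition norm2 (a : 'rV[R]_d) : R := Num.sqrt (\sum_(i < d) (a 0 i) ^+ 2).

Variables (E : rel V) (eps : R) (x : V -> 'rV[R]_d).

Definition infl_edge : rel V := fun u v => E u v && (norm2 (x u - x v) <= eps).

Definition nbhd (v : V) : {set V} := [set u | infl_edge u v || (u == v)].

Definition move (v : V) : 'rV[R]_d :=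
  (#|nbhd v|%:R)^-1 *: \sum_(u in nbhd v) (x u - x v).

End HKS.

Section HKS1.
Variables (R : realType) (V : finType) (E : rel V) (eps : R) (y : V -> R).

Definition nbhd1 (v : V) : {set V} :=
  [set u | (E u v && (`|y u - y v| <= eps)) || (u == v)].

Definition move1 (v : V) : R :=
  (#|nbhd1 v|%:R)^-1 * \sum_(u in nbhd1 v) (y u - y v).

End HKS1.

(* projected state along the edge {u,w}: positions x_v^T p, p = (x_u-x_w)/||x_u-x_w||;
   its social network is the influence network E_I. *)
Definition proj_dir (R : realType) (d : nat) (V : finType) (x : V -> 'rV[R]_d)
  (u w : V) : 'rV[R]_d := (norm2 (x u - x w))^-1 *: (x u - x w).

Definition proj_pos (R : realType) (d : nat) (V : finType) (x : V -> 'rV[R]_d)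
  (u w : V) (v : V) : R := dotv (x v) (proj_dir x u w).

(** Projecting onto the unit vector p along e is 1-Lipschitz by Cauchy–Schwarz,
   so no edge of E_I is lost in the projection, and no other edge of E can be
   gained since the projected social network is E_I itself; hence N_v = N̄_v.
   The projection is linear, so it maps each movement m_v to m̄_v, and
   |m̄_v| = |<m_v, p>| <= ||m_v||. The difference x_u - x_w is parallel to p,
   so its length is preserved. *)
From HB Require Import structures.
From mathcomp Require Import all_boot all_order all_algebra.
From mathcomp Require Import reals ring.
Set Implicit Arguments. Unset Strict Implicit. Unset Printing Implicit Defensive.
Import Order.TTheory GRing.Theory Num.Theory.
Local Open Scope ring_scope.

Section CauchySchwarz.
Variables (R : realType) (I : finType).

Lemma lagrange_identity (a b : I -> R) :
  \sum_i \sum_j (a i * b j - a j * b i) ^+ 2 =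
  2 * ((\sum_i a i ^+ 2) * (\sum_i b i ^+ 2) - (\sum_i a i * b i) ^+ 2).
Proof.
have sqr_sum_prod : (\sum_i a i * b i) ^+ 2 =
    \sum_i \sum_j a i * b i * (a j * b j).
  by rewrite expr2 big_distrl; apply: eq_bigr => i _; rewrite big_distrr.
have prod_sum_sqr : (\sum_i a i ^+ 2) * (\sum_i b i ^+ 2) =
    \sum_i \sum_j a i ^+ 2 * b j ^+ 2.
  by rewrite big_distrl; apply: eq_bigr => i _; rewrite big_distrr.
have expand : \sum_i \sum_j (a i * b j - a j * b i) ^+ 2 =
    \sum_i \sum_j (a i ^+ 2 * b j ^+ 2 - 2 * (a i * b i * (a j * b j)))
    + \sum_i \sum_j a j ^+ 2 * b i ^+ 2.
  rewrite -big_split /=; apply: eq_bigr => i _.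
  by rewrite -big_split /=; apply: eq_bigr => j _; ring.
rewrite expand [X in _ + X]exchange_big /= -big_split /=.
rewrite sqr_sum_prod prod_sum_sqr -sumrB mulr_sumr; apply: eq_bigr => i _.
by rewrite -big_split -sumrB mulr_sumr; apply: eq_bigr => j _ /=; ring.
Qed.

Lemma cauchy_schwarz_sum (a b : I -> R) :
  (\sum_i a i * b i) ^+ 2 <= (\sum_i a i ^+ 2) * (\sum_i b i ^+ 2).
Proof.
rewrite -subr_ge0 -(pmulr_rge0 _ (ltr0Sn R 1)) -lagrange_identity.
by do 2!apply: sumr_ge0 => ? _; exact: sqr_ge0.
Qed.

End CauchySchwarz.

Section EuclideanSpace.
Variables (R : realType) (d : nat).
Implicit Types (a b c : 'rV[R]_d) (k : R).

Lemma dotvBl a b c : dotv (a - b) c = dotv a c - dotv b c.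
Proof. by rewrite /dotv -sumrB; apply: eq_bigr => i _; rewrite !mxE mulrBl. Qed.

Lemma dotvZl k a c : dotv (k *: a) c = k * dotv a c.
Proof. by rewrite /dotv mulr_sumr; apply: eq_bigr => i _; rewrite !mxE mulrA. Qed.

Lemma dotvZr k a c : dotv a (k *: c) = k * dotv a c.
Proof. by rewrite /dotv mulr_sumr; apply: eq_bigr => i _; rewrite !mxE; ring. Qed.

Lemma dotv_suml (I : finType) (P : pred I) (f : I -> 'rV[R]_d) c :
  dotv (\sum_(i | P i) f i) c = \sum_(i | P i) dotv (f i) c.
Proof.
rewrite /dotv; under eq_bigr => j _ do rewrite summxE big_distrl.
exact: exchange_big.
Qed.

Lemma norm2_ge0 a : 0 <= norm2 a.
Proof. exact: sqrtr_ge0. Qed.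

Lemma sqr_norm2 a : norm2 a ^+ 2 = \sum_(i < d) a 0 i ^+ 2.
Proof. by rewrite sqr_sqrtr //; apply: sumr_ge0 => i _; exact: sqr_ge0. Qed.

Lemma dotvv a : dotv a a = norm2 a ^+ 2.
Proof. by rewrite sqr_norm2; apply: eq_bigr => i _; rewrite expr2. Qed.

Lemma norm2_eq0 a : (norm2 a == 0) = (a == 0).
Proof.
apply/eqP/eqP => [a0 | ->]; last first.
  by rewrite /norm2 big1 ?sqrtr0 // => i _; rewrite mxE expr0n.
have : \sum_(i < d) a 0 i ^+ 2 = 0 by rewrite -sqr_norm2 a0 expr0n.
move/psumr_eq0P => sqr_a0; apply/rowP => i; rewrite mxE.
by apply/eqP; rewrite -sqrf_eq0 sqr_a0 // => j _; exact: sqr_ge0.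
Qed.

Lemma norm2Z k a : norm2 (k *: a) = `|k| * norm2 a.
Proof.
rewrite /norm2 -sqrtr_sqr -sqrtrM ?sqr_ge0 // mulr_sumr.
by congr Num.sqrt; apply: eq_bigr => i _; rewrite mxE exprMn.
Qed.

Lemma norm2_normalize a : a != 0 -> norm2 ((norm2 a)^-1 *: a) = 1.
Proof.
rewrite -norm2_eq0 => a_neq0.
by rewrite norm2Z normfV ger0_norm ?norm2_ge0 // mulVf.
Qed.

(* No hypothesis is needed: for a = 0 both sides are 0 since 0^-1 = 0. *)
Lemma dotv_normalize a : dotv a ((norm2 a)^-1 *: a) = norm2 a.
Proof.
rewrite dotvZr dotvv; have [-> | n_neq0] := eqVneq (norm2 a) 0.
  by rewrite invr0 mul0r.
by rewrite expr2 mulKf.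
Qed.

Lemma ler_abs_dotv a b : `|dotv a b| <= norm2 a * norm2 b.
Proof.
rewrite /dotv -ler_sqr ?nnegrE ?mulr_ge0 ?norm2_ge0 //.
rewrite real_normK ?num_real // exprMn !sqr_norm2.
exact: cauchy_schwarz_sum.
Qed.

Lemma ler_abs_dotv_contraction a c : norm2 c <= 1 -> `|dotv a c| <= norm2 a.
Proof.
move=> c_le1; apply: le_trans (ler_abs_dotv a c) _.
by rewrite ler_piMr ?norm2_ge0.
Qed.

End EuclideanSpace.

Section Projection.
Variables (R : realType) (d : nat) (V : finType) (E : rel V) (eps : R).
Variables (x : V -> 'rV[R]_d) (p : 'rV[R]_d).
Hypothesis p_le1 : norm2 p <= 1.

Let y (v : V) : R := dotv (x v) p.

Lemma nbhd1_proj v : nbhd1 (infl_edge E eps x) eps y v = nbhd E eps x v.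
Proof.
apply/setP => z; rewrite !inE.
case infl_zv: (infl_edge E eps x z v) => //=.
move: infl_zv => /andP[_ near_zv].
by rewrite /y -dotvBl (le_trans (ler_abs_dotv_contraction _ p_le1)).
Qed.

Lemma move1_proj v : move1 (infl_edge E eps x) eps y v = dotv (move E eps x v) p.
Proof.
rewrite /move1 nbhd1_proj /move dotvZl dotv_suml.
by congr (_ * _); apply: eq_bigr => z _; rewrite dotvBl.
Qed.

Lemma weighted_move1_proj_le :
  \sum_v #|nbhd1 (infl_edge E eps x) eps y v|%:R
           * `|move1 (infl_edge E eps x) eps y v|
  <= \sum_v #|nbhd E eps x v|%:R * norm2 (move E eps x v).
Proof.
apply: ler_sum => v _; rewrite nbhd1_proj move1_proj.
exact/ler_wpM2l/ler_abs_dotv_contraction.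
Qed.

End Projection.

Theorem lemma1 (R : realType) (d : nat) (V : finType) (E : rel V) (eps : R)
  (x : V -> 'rV[R]_d) (u w : V) :
  symmetric E -> 0 < eps ->
  infl_edge E eps x u w -> x u != x w ->
  [/\ norm2 (x u - x w) = `|proj_pos x u w u - proj_pos x u w w|,
      (forall v : V,
         nbhd E eps x v = nbhd1 (infl_edge E eps x) eps (proj_pos x u w) v) &
      \sum_(v : V) #|nbhd1 (infl_edge E eps x) eps (proj_pos x u w) v|%:R
                    * `|move1 (infl_edge E eps x) eps (proj_pos x u w) v|
      <= \sum_(v : V) #|nbhd E eps x v|%:R * norm2 (move E eps x v)].
Proof.
move=> _ _ _ xu_neq_xw.
have p_eq1 : norm2 (proj_dir x u w) = 1.
  by rewrite norm2_normalize // subr_eq0.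
split.
- by rewrite /proj_pos -dotvBl dotv_normalize ger0_norm ?norm2_ge0.
- by move=> v; rewrite nbhd1_proj ?p_eq1.
- by apply: weighted_move1_proj_le; rewrite p_eq1.
Qed.
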